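(* For $0<\Delta<2$ let $\gamma_1(\theta)=(\cos\theta,\sin\theta,0)$ and $\gamma_2(\phi)=(\cos\phi+\Delta,0,\sin\phi)$, $\theta,\phi\in[0,2\pi)$; these two unit circles form a Hopf link. Their Möbius cross-energy $$E_c(\Delta)=2\int_0^{2\pi}\!\!\int_0^{2\pi}\frac{d\theta\,d\phi}{(\cos\theta+\Delta-\cos\phi)^2+\sin^2\phi+\sin^2\theta}$$ satisfies $$E_c(\Delta)=\frac{16\pi}{4-\Delta^2}\,K\!\left(-\frac{8(\Delta^2-2)}{(\Delta^2-4)^2}\right),$$ where $K(m)=\int_0^{\pi/2}(1-m\sin^2 t)^{-1/2}\,dt$ (the argument is $<1$ for all $\Delta\in(0,2)$). Moreover, $E_c$ attains its minimum over $(0,2)$ at $\Delta=\sqrt2$, with $E_c(\sqrt2)=4\pi^2$.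
   Context: The Möbius cross-energy of two disjoint closed curves $\gamma_i,\gamma_j$ in $\mathbb R^3$ is taken with the convention that each pair of line elements is counted twice: $E_c=2\int\int \frac{|\dot\gamma_i(u)||\dot\gamma_j(v)|}{|\gamma_i(u)-\gamma_j(v)|^2}\,du\,dv$. The integral displayed in the claim is this quantity for the two curves given. *)

From Stdlib Require Import Reals.
From Coquelicot Require Import Coquelicot.
Open Scope R_scope.

Definition gamma1 (t : R) : R * R * R := (cos t, sin t, 0).
Definition gamma2 (D p : R) : R * R * R := (cos p + D, 0, sin p).
Definition sqdist3 (u v : R * R * R) : R :=
  let '(a1, a2, a3) := u in let '(b1, b2, b3) := v in
  (a1 - b1) ^ 2 + (a2 - b2) ^ 2 + (a3 - b3) ^ 2.

(* Moebius cross-energy of the link (each pair of line elements counted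
   twice); both parametrizations have unit speed. *)
Definition Ec (D : R) : R :=
  2 * RInt (fun t => RInt (fun p => / sqdist3 (gamma1 t) (gamma2 D p)) 0 (2 * PI))
           0 (2 * PI).

Definition EllK (m : R) : R :=
  RInt (fun t => / sqrt (1 - m * (sin t) ^ 2)) 0 (PI / 2).

From Stdlib Require Import Reals Lra Psatz.
From Coquelicot Require Import Coquelicot.
Open Scope R_scope.

(* The squared distance splits as A - B cos p with
   A^2 - B^2 = |e^(it) - (Delta + 1)|^2 |e^(it) - (Delta - 1)|^2, and
   int dp / (A - B cos p) = 2 pi / sqrt (A^2 - B^2) because the boundary map of a
   disc automorphism has the Poisson kernel as derivative.  Reparametrizing the
   outer integral by the boundary map for r = Delta - 1 turns it into the
   potential G(s) = int dx / |2 - s e^(ix)| at s = 2 - Delta^2, and x = 2y + pi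
   identifies G(s) with an elliptic integral.  Finally 1 / |2 - s e^(ix)|
   dominates Re 1 / (2 - s e^(ix)), whose integral over the circle is pi by the
   mean value property; hence G(s) >= pi = G(0), attained at Delta = sqrt 2. *)

(* [lawcos a b t = |a e^(it) - b|^2]. *)
Definition lawcos (a b t : R) : R := a ^ 2 + b ^ 2 - 2 * a * b * cos t.

Lemma affine_cos_pos A B t : -A < B < A -> 0 < A - B * cos t.
Proof.
  intros HAB; pose proof (COS_bound t).
  destruct (Rle_dec 0 B).
  - assert (0 <= B * (1 - cos t)) by (apply Rmult_le_pos; lra); nra.
  - assert (0 <= - B * (1 + cos t)) by (apply Rmult_le_pos; lra); nra.
Qed.

Lemma lawcos_pos a b t : a ^ 2 <> b ^ 2 -> 0 < lawcos a b t.
Proof.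
  intros Hab.
  assert (Hm : 0 < (a - b) ^ 2) by (apply pow2_gt_0; intros E; apply Hab; nra).
  assert (Hp : 0 < (a + b) ^ 2) by (apply pow2_gt_0; intros E; apply Hab; nra).
  apply affine_cos_pos; split; nra.
Qed.

Lemma lawcos_2_pos s x : -2 < s < 2 -> 0 < lawcos s 2 x.
Proof. intros Hs; apply lawcos_pos, Rlt_not_eq; nra. Qed.

Lemma continuous_lawcos a b t : continuous (lawcos a b) t.
Proof. apply (ex_derive_continuous (lawcos a b)); unfold lawcos; auto_derive; exact I. Qed.

Lemma continuous_inv_sqrt (g : R -> R) x :
  continuous g x -> 0 < g x ->
  continuous (fun y => / sqrt (g y)) x.
Proof.
  intros Hg Hpos. apply continuous_Rinv_comp.
  - exact (continuous_sqrt_comp g x Hg).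
  - apply Rgt_not_eq, sqrt_lt_R0, Hpos.
Qed.

Lemma ex_RInt_inv_sqrt (g : R -> R) a b :
  (forall x, continuous g x) -> (forall x, 0 < g x) ->
  ex_RInt (fun x => / sqrt (g x)) a b.
Proof.
  intros Hg Hpos. apply (ex_RInt_continuous (V := R_CompleteNormedModule)).
  intros x _; apply continuous_inv_sqrt; auto.
Qed.

Lemma RInt_even (f : R -> R) a :
  (forall x, f (- x) = f x) -> ex_RInt f 0 a -> RInt f (- a) a = 2 * RInt f 0 a.
Proof.
  intros Heven Hex.
  pose proof (RInt_correct f 0 a Hex) as H.
  assert (Hneg : is_RInt f (- a) 0 (RInt f 0 a)).
  { rewrite <- Ropp_0 in H at 1; rewrite <- (Ropp_involutive a) in H.
    apply (is_RInt_comp_opp (V := R_NormedModule)), (is_RInt_opp (V := R_NormedModule)),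
      (is_RInt_swap (V := R_NormedModule)) in H.
    rewrite !(opp_opp (G := R_AbelianGroup)) in H.
    refine (is_RInt_ext _ _ _ _ _ _ H); intros x _.
    rewrite Heven; apply (opp_opp (G := R_AbelianGroup)). }
  apply is_RInt_unique.
  replace (2 * RInt f 0 a) with (plus (RInt f 0 a) (RInt f 0 a)) by (unfold plus; simpl; ring).
  apply (is_RInt_Chasles (V := R_NormedModule)) with 0; assumption.
Qed.

Definition poisson_kernel (r t : R) : R := (1 - r ^ 2) / lawcos 1 r t.

(* The argument of [(e^(it) - r) / (1 - r e^(it))], i.e. the boundary map of
   a disc automorphism, continuously lifted to the real line. *)
Definition mobius_angle (r t : R) : R := t + 2 * atan (r * sin t / (1 - r * cos t)).

Section MobiusAngle.

Variable r : R.
Hypothesis Hr : -1 < r < 1.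

Let lawcos_1r_pos t : 0 < lawcos 1 r t.
Proof. apply lawcos_pos; nra. Qed.

Let one_sub_rcos_pos t : 0 < 1 - r * cos t.
Proof. apply affine_cos_pos; lra. Qed.

Lemma is_derive_mobius_angle t : is_derive (mobius_angle r) t (poisson_kernel r t).
Proof.
  pose proof (lawcos_1r_pos t); pose proof (one_sub_rcos_pos t).
  pose proof (sin2_cos2 t) as Hsc; unfold Rsqr in Hsc.
  unfold mobius_angle, poisson_kernel, lawcos in *; auto_derive.
  - lra.
  - field_simplify; try lra.
    + replace (sin t ^ 2) with (1 - cos t ^ 2) by nra. field; nra.
    + split; nra.
Qed.

Lemma continuous_poisson_kernel t : continuous (poisson_kernel r) t.
Proof.
  pose proof (lawcos_1r_pos t).
  apply (ex_derive_continuous (poisson_kernel r)); unfold poisson_kernel, lawcos in *.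
  auto_derive; lra.
Qed.

Lemma mobius_angle_0 : mobius_angle r 0 = 0.
Proof. unfold mobius_angle; rewrite sin_0, Rmult_0_r, Rdiv_0_l, atan_0; ring. Qed.

Lemma mobius_angle_2PI : mobius_angle r (2 * PI) = 2 * PI.
Proof. unfold mobius_angle; rewrite sin_2PI, Rmult_0_r, Rdiv_0_l, atan_0; ring. Qed.

Lemma cos_mobius_angle t :
  cos (mobius_angle r t) = ((1 + r ^ 2) * cos t - 2 * r) / lawcos 1 r t.
Proof.
  pose proof (lawcos_1r_pos t); pose proof (one_sub_rcos_pos t).
  pose proof (sin2_cos2 t) as Hsc; unfold Rsqr in Hsc.
  unfold mobius_angle; set (u := r * sin t / (1 - r * cos t)).
  rewrite cos_plus, cos_2a, sin_2a, cos_atan, sin_atan.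
  assert (Hq : sqrt (1 + u²) * sqrt (1 + u²) = 1 + u²) by (apply sqrt_sqrt; unfold Rsqr; nra).
  assert (Hqp : 0 < sqrt (1 + u²)) by (apply sqrt_lt_R0; unfold Rsqr; nra).
  transitivity ((cos t * (1 - u ^ 2) - 2 * sin t * u) / (sqrt (1 + u²) * sqrt (1 + u²))).
  { field; lra. }
  rewrite Hq; unfold Rsqr.
  assert (Hs : sin t ^ 2 = 1 - cos t ^ 2) by nra.
  assert (Hden : 1 + u * u = lawcos 1 r t / (1 - r * cos t) ^ 2).
  { unfold u, lawcos; field_simplify; try lra. rewrite Hs; field; nra. }
  assert (Hnum : cos t * (1 - u ^ 2) - 2 * sin t * u
                 = ((1 + r ^ 2) * cos t - 2 * r) / (1 - r * cos t) ^ 2).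
  { unfold u; field_simplify; try lra. rewrite Hs; field; nra. }
  rewrite Hden, Hnum; field; lra.
Qed.

Lemma is_RInt_poisson_kernel : is_RInt (poisson_kernel r) 0 (2 * PI) (2 * PI).
Proof.
  pose proof (is_RInt_derive (mobius_angle r) (poisson_kernel r) 0 (2 * PI)
    (fun x _ => is_derive_mobius_angle x) (fun x _ => continuous_poisson_kernel x)) as H.
  rewrite mobius_angle_2PI, mobius_angle_0 in H.
  unfold minus, plus, opp in H; simpl in H; rewrite Ropp_0, Rplus_0_r in H; exact H.
Qed.

Lemma RInt_comp_mobius_angle (f : R -> R) :
  (forall x, continuous f x) ->
  RInt (fun t => poisson_kernel r t * f (mobius_angle r t)) 0 (2 * PI)
  = RInt f 0 (2 * PI).
Proof.
  intros Hf.
  rewrite <- mobius_angle_0 at 2; rewrite <- mobius_angle_2PI at 2.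
  rewrite <- (RInt_comp f (mobius_angle r) (poisson_kernel r)); auto.
  intros x _; split; [apply is_derive_mobius_angle | apply continuous_poisson_kernel].
Qed.

End MobiusAngle.

Lemma poisson_kernel_affine A B x :
  -A < B < A ->
  poisson_kernel (B / (A + sqrt (A ^ 2 - B ^ 2))) x
  = sqrt (A ^ 2 - B ^ 2) / (A - B * cos x).
Proof.
  intros HAB.
  set (S := sqrt (A ^ 2 - B ^ 2)).
  assert (HS : 0 < S) by (apply sqrt_lt_R0; nra).
  assert (HS2 : S * S = A ^ 2 - B ^ 2) by (apply sqrt_sqrt; nra).
  pose proof (affine_cos_pos A B x HAB).
  assert (Hrho2 : (B / (A + S)) ^ 2 = (A - S) / (A + S)).
  { replace ((B / (A + S)) ^ 2) with (B * B / ((A + S) * (A + S))) by (field; lra).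
    replace (B * B) with ((A - S) * (A + S)) by nra. field; lra. }
  unfold poisson_kernel, lawcos; rewrite Hrho2.
  replace (1 ^ 2 + (A - S) / (A + S) - 2 * 1 * (B / (A + S)) * cos x)
    with (2 * (A - B * cos x) / (A + S)) by (field; lra).
  field; lra.
Qed.

Lemma is_RInt_inv_affine_cos A B :
  -A < B < A ->
  is_RInt (fun p => / (A - B * cos p)) 0 (2 * PI) (2 * PI / sqrt (A ^ 2 - B ^ 2)).
Proof.
  intros HAB.
  set (S := sqrt (A ^ 2 - B ^ 2)).
  assert (HS : 0 < S) by (apply sqrt_lt_R0; nra).
  assert (Hrho : -1 < B / (A + S) < 1).
  { split; apply Rmult_lt_reg_r with (A + S); try lra; field_simplify; lra. }
  pose proof (is_RInt_scal _ _ _ (/ S) _ (is_RInt_poisson_kernel _ Hrho)) as H.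
  replace (2 * PI / S) with (scal (/ S) (2 * PI))
    by (unfold scal; simpl; unfold mult; simpl; field; lra).
  refine (is_RInt_ext _ _ _ _ _ _ H); intros x _; unfold scal; simpl; unfold mult; simpl.
  rewrite poisson_kernel_affine by exact HAB; fold S.
  pose proof (affine_cos_pos A B x HAB); field; lra.
Qed.

Lemma sqdist3_gamma D t p :
  sqdist3 (gamma1 t) (gamma2 D p) = (1 + lawcos 1 D t) - 2 * (cos t - D) * cos p.
Proof.
  unfold sqdist3, gamma1, gamma2, lawcos.
  pose proof (sin2_cos2 t); pose proof (sin2_cos2 p); unfold Rsqr in *; nra.
Qed.

Lemma RInt_inv_sqdist3_gamma D t :
  0 < D < 2 ->
  RInt (fun p => / sqdist3 (gamma1 t) (gamma2 D p)) 0 (2 * PI)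
  = 2 * PI / sqrt (lawcos 1 (D + 1) t * lawcos 1 (D - 1) t).
Proof.
  intros HD.
  assert (Hp : 0 < lawcos 1 (D + 1) t) by (apply lawcos_pos; nra).
  assert (Hm : 0 < lawcos 1 (D - 1) t) by (apply lawcos_pos; nra).
  apply is_RInt_unique.
  replace (lawcos 1 (D + 1) t * lawcos 1 (D - 1) t)
    with ((1 + lawcos 1 D t) ^ 2 - (2 * (cos t - D)) ^ 2) by (unfold lawcos; ring).
  refine (is_RInt_ext _ _ _ _ _ _ (is_RInt_inv_affine_cos _ _ _)).
  - intros p _; rewrite sqdist3_gamma; reflexivity.
  - unfold lawcos in *; split; nra.
Qed.

Definition circle_potential (s : R) : R :=
  RInt (fun x => / sqrt (lawcos s 2 x)) 0 (2 * PI).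

Lemma lawcos_mobius_angle D t :
  0 < D < 2 ->
  lawcos (2 - D ^ 2) 2 (mobius_angle (D - 1) t)
  = (D * (2 - D)) ^ 2 * lawcos 1 (D + 1) t / lawcos 1 (D - 1) t.
Proof.
  intros HD.
  assert (Hm : 0 < lawcos 1 (D - 1) t) by (apply lawcos_pos; nra).
  unfold lawcos at 1; rewrite cos_mobius_angle by lra.
  unfold lawcos in *; field; lra.
Qed.

Lemma inv_sqrt_lawcos_mobius_angle D t :
  0 < D < 2 ->
  / sqrt (lawcos 1 (D + 1) t * lawcos 1 (D - 1) t)
  = poisson_kernel (D - 1) t * / sqrt (lawcos (2 - D ^ 2) 2 (mobius_angle (D - 1) t)).
Proof.
  intros HD.
  assert (Hp : 0 < lawcos 1 (D + 1) t) by (apply lawcos_pos; nra).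
  assert (Hm : 0 < lawcos 1 (D - 1) t) by (apply lawcos_pos; nra).
  rewrite lawcos_mobius_angle by exact HD.
  rewrite sqrt_div_alt, (sqrt_mult_alt ((D * (2 - D)) ^ 2)), sqrt_pow2,
    (sqrt_mult_alt (lawcos 1 (D + 1) t)) by (try apply pow2_ge_0; nra).
  pose proof (sqrt_lt_R0 _ Hp); pose proof (sqrt_lt_R0 _ Hm).
  pose proof (sqrt_sqrt _ (Rlt_le _ _ Hm)) as Hsq.
  unfold poisson_kernel; set (q := sqrt (lawcos 1 (D - 1) t)) in *; rewrite <- Hsq.
  replace (1 - (D - 1) ^ 2) with (D * (2 - D)) by ring.
  field; split; nra.
Qed.

Lemma Ec_circle_potential D : 0 < D < 2 -> Ec D = 4 * PI * circle_potential (2 - D ^ 2).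
Proof.
  intros HD.
  assert (Hs : -2 < 2 - D ^ 2 < 2) by nra.
  set (g := fun t => / sqrt (lawcos 1 (D + 1) t * lawcos 1 (D - 1) t)).
  assert (Hg : ex_RInt g 0 (2 * PI)).
  { apply ex_RInt_inv_sqrt.
    - intros x; apply (continuous_mult (K := R_AbsRing)); apply continuous_lawcos.
    - intros x; apply Rmult_lt_0_compat; apply lawcos_pos; nra. }
  unfold Ec; rewrite (RInt_ext _ (fun t => scal (2 * PI) (g t))).
  2:{ intros t _; rewrite RInt_inv_sqdist3_gamma by exact HD; reflexivity. }
  rewrite (RInt_scal (V := R_CompleteNormedModule)) by exact Hg.
  rewrite (RInt_ext g (fun t => poisson_kernel (D - 1) t
                                * / sqrt (lawcos (2 - D ^ 2) 2 (mobius_angle (D - 1) t)))).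
  2:{ intros t _; apply inv_sqrt_lawcos_mobius_angle, HD. }
  rewrite (RInt_comp_mobius_angle (D - 1) ltac:(lra) (fun x => / sqrt (lawcos (2 - D ^ 2) 2 x))).
  2:{ intros x; apply continuous_inv_sqrt; [apply continuous_lawcos | apply lawcos_2_pos, Hs]. }
  unfold circle_potential, scal; simpl; unfold mult; simpl; ring.
Qed.

Lemma one_sub_sin2_pos m y : m < 1 -> 0 < 1 - m * sin y ^ 2.
Proof.
  intros Hm; pose proof (sin2_cos2 y); unfold Rsqr in *.
  assert (0 <= sin y ^ 2 <= 1) by nra.
  destruct (Rle_dec m 0); nra.
Qed.

Lemma ex_RInt_EllK_integrand m a b :
  m < 1 -> ex_RInt (fun t => / sqrt (1 - m * sin t ^ 2)) a b.
Proof.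
  intros Hm; apply ex_RInt_inv_sqrt; [|intros; apply one_sub_sin2_pos, Hm].
  intros x; apply (ex_derive_continuous (fun t => 1 - m * sin t ^ 2)); auto_derive; exact I.
Qed.

Lemma RInt_EllK_sym m :
  m < 1 -> RInt (fun t => / sqrt (1 - m * sin t ^ 2)) (- (PI / 2)) (PI / 2) = 2 * EllK m.
Proof.
  intros Hm; apply RInt_even.
  - intros x; rewrite sin_neg; f_equal; f_equal; ring.
  - apply ex_RInt_EllK_integrand, Hm.
Qed.

Lemma circle_potential_0 : circle_potential 0 = PI.
Proof.
  unfold circle_potential; rewrite (RInt_ext _ (fun _ => / 2)).
  - rewrite RInt_const; unfold scal; simpl; unfold mult; simpl; field.
  - intros x _; unfold lawcos; replace (0 ^ 2 + 2 ^ 2 - 2 * 0 * 2 * cos x) with (2 * 2) by ring.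
    rewrite sqrt_square; lra.
Qed.

Lemma elliptic_parameter_lt_1 s : -2 < s < 2 -> 8 * s / (2 + s) ^ 2 < 1.
Proof.
  intros Hs; apply Rmult_lt_reg_r with ((2 + s) ^ 2); [nra|].
  field_simplify; [nra|lra].
Qed.

Section CirclePotential.

Variable s : R.
Hypothesis Hs : -2 < s < 2.

Lemma circle_potential_EllK :
  circle_potential s = 4 / (2 + s) * EllK (8 * s / (2 + s) ^ 2).
Proof.
  pose proof (elliptic_parameter_lt_1 s Hs) as Hm.
  set (m := 8 * s / (2 + s) ^ 2) in *.
  unfold circle_potential.
  pose proof (RInt_comp_lin (fun x => / sqrt (lawcos s 2 x)) 2 PI (- (PI / 2)) (PI / 2)) as Hc.
  replace (2 * - (PI / 2) + PI) with 0 in Hc by field.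
  replace (2 * (PI / 2) + PI) with (2 * PI) in Hc by field.
  rewrite <- Hc.
  2:{ apply ex_RInt_inv_sqrt; [apply continuous_lawcos | intros; apply lawcos_2_pos, Hs]. }
  rewrite (RInt_ext _ (fun y => scal (2 / (2 + s)) (/ sqrt (1 - m * sin y ^ 2)))).
  - rewrite (RInt_scal (V := R_CompleteNormedModule)).
    + rewrite RInt_EllK_sym by exact Hm; unfold scal; simpl; unfold mult; simpl; field; lra.
    + apply ex_RInt_EllK_integrand, Hm.
  - intros y _; unfold scal; simpl; unfold mult; simpl.
    pose proof (one_sub_sin2_pos m y Hm) as Hpos.
    assert (Hsub : lawcos s 2 (2 * y + PI) = (2 + s) ^ 2 * (1 - m * sin y ^ 2)).
    { unfold lawcos, m; rewrite neg_cos, cos_2a_sin; field; lra. }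
    rewrite Hsub, sqrt_mult_alt, sqrt_pow2 by (try apply pow2_ge_0; lra).
    pose proof (sqrt_lt_R0 _ Hpos); change (sin y * (sin y * 1)) with (sin y ^ 2); field; lra.
Qed.

Lemma is_RInt_re_circle_potential :
  is_RInt (fun x => (2 - s * cos x) / lawcos s 2 x) 0 (2 * PI) PI.
Proof.
  assert (Hpoisson := is_RInt_inv_affine_cos (4 + s ^ 2) (4 * s) ltac:(split; nra)).
  replace (sqrt ((4 + s ^ 2) ^ 2 - (4 * s) ^ 2)) with (4 - s ^ 2) in Hpoisson.
  2:{ replace ((4 + s ^ 2) ^ 2 - (4 * s) ^ 2) with ((4 - s ^ 2) ^ 2) by ring.
      rewrite sqrt_pow2; nra. }
  pose proof (is_RInt_plus _ _ _ _ _ _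
    (is_RInt_const (V := R_NormedModule) 0 (2 * PI) (1 / 4))
    (is_RInt_scal _ _ _ ((4 - s ^ 2) / 4) _ Hpoisson)) as H.
  match type of H with is_RInt _ _ _ ?v =>
    replace v with PI in H by (unfold plus, scal; simpl; unfold mult; simpl; field; nra) end.
  refine (is_RInt_ext _ _ _ _ _ _ H); intros x _.
  pose proof (lawcos_2_pos s x Hs); unfold plus, scal, lawcos in *; simpl; unfold mult; simpl.
  field; lra.
Qed.

Lemma pi_le_circle_potential : PI <= circle_potential s.
Proof.
  rewrite <- (is_RInt_unique _ _ _ _ is_RInt_re_circle_potential).
  apply RInt_le.
  - pose proof PI_RGT_0; lra.
  - exists PI; exact is_RInt_re_circle_potential.
  - apply ex_RInt_inv_sqrt; [apply continuous_lawcos | intros; apply lawcos_2_pos, Hs].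
  - intros x _.
    pose proof (lawcos_2_pos s x Hs) as HL.
    pose proof (sqrt_lt_R0 _ HL) as Hq.
    pose proof (sqrt_sqrt _ (Rlt_le _ _ HL)) as Hqq.
    set (q := sqrt (lawcos s 2 x)) in *.
    assert (Hre : 0 < 2 - s * cos x) by (apply affine_cos_pos; lra).
    assert (Hmod : 2 - s * cos x <= q).
    { pose proof (sin2_cos2 x); unfold Rsqr, lawcos in *; nra. }
    rewrite <- Hqq; apply Rmult_le_reg_r with (q * q); [nra|].
    field_simplify; nra.
Qed.

End CirclePotential.

Theorem mainTheorem1 :
  (forall D : R, 0 < D < 2 ->
     - (8 * (D ^ 2 - 2)) / (D ^ 2 - 4) ^ 2 < 1 /\
     Ec D = 16 * PI / (4 - D ^ 2) * EllK (- (8 * (D ^ 2 - 2)) / (D ^ 2 - 4) ^ 2)) /\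
  (forall D : R, 0 < D < 2 -> Ec (sqrt 2) <= Ec D) /\
  Ec (sqrt 2) = 4 * PI ^ 2.
Proof.
  assert (Hsqrt2 : sqrt 2 ^ 2 = 2) by (apply pow2_sqrt; lra).
  assert (Hsqrt2_range : 0 < sqrt 2 < 2).
  { split; [apply sqrt_lt_R0; lra|]. pose proof (sqrt_pos 2); nra. }
  assert (Hmin : Ec (sqrt 2) = 4 * PI ^ 2).
  { rewrite Ec_circle_potential, Hsqrt2, Rminus_diag, circle_potential_0 by exact Hsqrt2_range.
    ring. }
  split; [|split; [|exact Hmin]].
  - intros D HD.
    assert (Hs : -2 < 2 - D ^ 2 < 2) by nra.
    replace (- (8 * (D ^ 2 - 2)) / (D ^ 2 - 4) ^ 2)
      with (8 * (2 - D ^ 2) / (2 + (2 - D ^ 2)) ^ 2) by (field; nra).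
    split; [exact (elliptic_parameter_lt_1 _ Hs)|].
    rewrite Ec_circle_potential, circle_potential_EllK by assumption.
    field; nra.
  - intros D HD.
    rewrite Hmin, Ec_circle_potential by exact HD.
    pose proof (pi_le_circle_potential (2 - D ^ 2) ltac:(nra)); pose proof PI_RGT_0; nra.
Qed.
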